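(* Fix a prompt $q$, $\beta>0$, $\varepsilon>0$, and assume $1-\rho^+(q)-\rho^-(q)>0$ and $0<p_{\mathrm{ref}}(q)<1$. Let $(\pi_k)_{k\ge0}$ be policies such that, for each $k\ge1$, $\pi_k(\cdot\mid q)$ maximizes over all distributions $\pi(\cdot\mid q)$ on $\mathcal O$ the noisy regularized objective \[ \frac{(1-\rho^+(q)-\rho^-(q))\,\bigl(p_\pi(q)-p_{\pi_{k-1}}(q)\bigr)}{\sqrt{\mu_{\pi_{k-1}}(q)(1-\mu_{\pi_{k-1}}(q))+\varepsilon}}-\beta\,\mathrm{KL}\bigl(\pi(\cdot\mid q)\,\|\,\pi_{\mathrm{ref}}(\cdot\mid q)\bigr). \] Then $p_{\pi_k}(q)>p_{\mathrm{ref}}(q)$ for all $k\ge1$.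
   Context: Setting: $\mathcal O$ is a countable set of responses; $r^*:\mathcal Q\times\mathcal O\to\{0,1\}$ is the true binary reward; a policy gives a distribution $\pi(\cdot\mid q)$ on $\mathcal O$; $p_\pi(q)=\mathbb E_{o\sim\pi(\cdot\mid q)}[r^*(q,o)]$. $\pi_{\mathrm{ref}}$ is a fixed reference policy and $p_{\mathrm{ref}}(q)=p_{\pi_{\mathrm{ref}}}(q)$. Flip rates $\rho^+(q),\rho^-(q)\in[0,1]$ are the probabilities that a true reward $0$ is observed as $1$, respectively a true reward $1$ is observed as $0$; $\mu_{\pi}(q)=\rho^+(q)+(1-\rho^+(q)-\rho^-(q))\,p_{\pi}(q)$. $\mathrm{KL}$ is the Kullback–Leibler divergence. *)

From HB Require Import structures.
From mathcomp Require Import all_boot all_order all_algebra.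
From mathcomp Require Import all_classical all_reals all_analysis.
Set Implicit Arguments. Unset Strict Implicit. Unset Printing Implicit Defensive.
Import Order.TTheory GRing.Theory Num.Theory.
Local Open Scope classical_set_scope.
Local Open Scope ring_scope.

Section Defs.
Variables (R : realType) (O : countType).

Definition is_dist (pi : O -> R) : Prop :=
  (forall o, 0 <= pi o) /\ (\esum_(o in [set: O]) (pi o)%:E = 1)%E.

(** p_pi = E_{o ~ pi}[r(o)] for a binary reward r (terms are nonnegative
    and the sum is at most 1, hence finite). *)
Definition succ_prob (r : O -> bool) (pi : O -> R) : R :=
  fine (\esum_(o in [set: O]) ((pi o * (r o)%:R)%:E)).

Definition kl_term (pi ref : O -> R) (o : O) : \bar R :=
  if pi o == 0 then 0%E
  else if ref o == 0 then +oo%E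
  else (pi o * ln (pi o / ref o))%:E.

(** KL(pi || ref) = sum of positive parts - sum of negative parts
    (the negative part is always finite, so this is well defined in \bar R). *)
Definition KL (pi ref : O -> R) : \bar R :=
  (\esum_(o in [set: O]) maxe (kl_term pi ref o) 0%E
   - \esum_(o in [set: O]) maxe (- kl_term pi ref o) 0%E)%E.

Definition noisy_mean (rp rm p : R) : R := rp + (1 - rp - rm) * p.

Definition noisy_objective (rp rm eps beta : R) (r : O -> bool)
    (pi_prev pi ref : O -> R) : \bar R :=
  let pprev := succ_prob r pi_prev in
  let mu := noisy_mean rp rm pprev in
  (((1 - rp - rm) * (succ_prob r pi - pprev)
      / Num.sqrt (mu * (1 - mu) + eps))%:E
   - beta%:E * KL pi ref)%E.

End Defs.

From HB Require Import structures.
From mathcomp Require Import all_boot all_order all_algebra.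
From mathcomp Require Import all_classical all_reals all_analysis.
From mathcomp Require Import ring lra.
Import Order.TTheory GRing.Theory Num.Theory.
Local Open Scope ring_scope.
Local Open Scope classical_set_scope.

(* Since KL >= 0, optimality of [pi k] against any competitor [sigma] gives
   [c * p_(pi k) >= c * p_sigma - beta * KL(sigma || pi_ref)], where
   [c = (1 - rho+ - rho-) / sqrt(mu (1 - mu) + eps) > 0].  Take for [sigma] the
   reference policy with the successes reweighted by [a = 1 + t (1 - p) / p] and
   the failures by [b = 1 - t], where [p = p_ref]: its success probability is
   [p + t (1 - p)], while its KL divergence from the reference is at most the
   chi-square divergence [t^2 (1 - p) / p].  For small [t] the linear gain beats
   the quadratic penalty, whence [p_(pi k) > p_ref]. *)

Lemma esumZl {R : realType} {T : choiceType} {c : R} {a : T -> \bar R} :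
  0 <= c -> (forall x, 0 <= a x)%E ->
  (\esum_(x in [set: T]) (c%:E * a x) = c%:E * \esum_(x in [set: T]) a x)%E.
Proof.
move=> c0 a0; rewrite /esum -ereal_supZl //; last first.
  by apply/set0P; exists 0%E; exists set0; [exact: fsets_set0 | rewrite fsbig_set0].
rewrite image_comp; congr ereal_sup.
by apply: eq_imagel => A _ /=; rewrite ge0_mule_fsumr.
Qed.

Lemma ln_le_subr1 (R : realType) (x : R) : 0 < x -> ln x <= x - 1.
Proof.
by move=> x0; have := @le_ln1Dx R (x - 1); rewrite addrCA subrr addr0; apply; lra.
Qed.

Section gibbs.
Context {R : realType} {O : countType}.

Lemma kl_term_ge {sig ref : O -> R} {o : O} : 0 <= sig o -> 0 <= ref o ->
  ((sig o - ref o)%:E <= kl_term sig ref o)%E.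
Proof.
move=> sig0 ref0; rewrite /kl_term; have [->|sign0] := eqVneq (sig o) 0.
  by rewrite lee_fin; lra.
have [_|refn0] := eqVneq (ref o) 0; first by rewrite leey.
have sigp : 0 < sig o by rewrite lt0r sign0.
have refp : 0 < ref o by rewrite lt0r refn0.
rewrite lee_fin -invf_div lnV ?posrE ?divr_gt0 //.
have := @ln_le_subr1 R _ (divr_gt0 refp sigp).
have -> : sig o - ref o = sig o * (1 - ref o / sig o) by field; rewrite gt_eqF.
by move=> h; apply: ler_wpM2l; [exact: ltW | lra].
Qed.

Lemma KL_ge0 (sig ref : O -> R) : is_dist sig -> is_dist ref -> (0 <= KL sig ref)%E.
Proof.
move=> [sig0 sig1] [ref0 ref1].
have kl_real o : exists2 x : R, (sig o - ref o <= x) &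
    kl_term sig ref o = +oo%E \/ kl_term sig ref o = x%:E.
  have := kl_term_ge (sig0 o) (ref0 o).
  case: (kl_term sig ref o) => [x | | ] //; first by exists x; [|right].
  by exists (sig o - ref o) => //; left.
rewrite /KL; set A := esum _ _; set B := esum _ _.
have B_le1 : (B <= 1)%E.
  rewrite -ref1; apply: le_esum => o _; have [x hx [->|->]] := kl_real o.
    by rewrite max_r ?lee_fin ?leNye.
  by rewrite -EFinN -EFin_max lee_fin ge_max ref0; have := sig0 o; lra.
have B_fin : B \is a fin_num.
  rewrite ge0_fin_numE ?(le_lt_trans B_le1) ?ltry //.
  by apply: esum_ge0 => o _; rewrite le_max lexx orbT.
(* sum the pointwise bound [kl_term >= sig - ref] against [sum sig = sum ref] *)
have : (1 + B <= A + 1)%E.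
  have maxe_ge0 (x : \bar R) : (0 <= maxe x 0)%E by rewrite le_max lexx orbT.
  rewrite -{1}sig1 -ref1 -!esumD //; try by move=> o _; rewrite ?lee_fin.
  apply: le_esum => o _; have [x hx [->|->]] := kl_real o.
    by rewrite (max_l (leey 0%E)) addye ?leey.
  rewrite -EFinN -!EFin_max -!EFinD lee_fin.
  by have := sig0 o; have := ref0 o; rewrite /Num.max; do 2!case: ifP; lra.
by rewrite addeC leeD2lE // suber_ge0.
Qed.

End gibbs.

Section success_split.
Context {R : realType} {O : countType} (r : O -> bool) (ref : O -> R).
Hypothesis ref_dist : is_dist ref.
Local Notation p := (succ_prob r ref).

Lemma esum_success_failure (A B : R) : 0 <= A -> 0 <= B ->
  (\esum_(o in [set: O]) (ref o * (if r o then A else B))%:E =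
   (A * p + B * (1 - p))%:E)%E.
Proof.
case: ref_dist => ref0 ref1 A0 B0.
pose S := (\esum_(o in [set: O]) (ref o * (r o)%:R)%:E)%E.
pose F := (\esum_(o in [set: O]) (ref o * (1 - (r o)%:R))%:E)%E.
have S0 o : (0 <= (ref o * (r o)%:R)%:E)%E.
  by rewrite lee_fin; case: (r o); rewrite ?mulr1 ?mulr0.
have F0 o : (0 <= (ref o * (1 - (r o)%:R))%:E)%E.
  by rewrite lee_fin; case: (r o); rewrite ?subrr ?mulr0 ?subr0 ?mulr1.
have SF : (S + F = 1)%E.
  rewrite -ref1 -esumD //; apply: eq_esum => o _; rewrite -EFinD; congr EFin; ring.
have fin_sum1 (x y : \bar R) :
    (0 <= x)%E -> (0 <= y)%E -> (x + y = 1)%E -> x \is a fin_num.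
  move=> x0 y0 xy; rewrite ge0_fin_numE // (le_lt_trans _ (ltry 1)) //.
  by rewrite -xy leeDl.
have SE : S = p%:E.
  by rewrite /succ_prob -/S fineK // (fin_sum1 _ F) ?esum_ge0.
have FE : F = (1 - p)%:E.
  have Ffin : F \is a fin_num by apply: (fin_sum1 F S); rewrite ?esum_ge0 // addeC.
  by move: SF; rewrite SE -[F]fineK // -EFinD => -[<-]; rewrite addrAC subrr add0r.
transitivity (\esum_(o in [set: O])
    (A%:E * (ref o * (r o)%:R)%:E + B%:E * (ref o * (1 - (r o)%:R))%:E))%E.
  by apply: eq_esum => o _; rewrite -!EFinM -EFinD; congr EFin; case: (r o) => /=; ring.
rewrite esumD => [|o _|o _]; last 2 first.
- by rewrite mule_ge0 ?S0 ?lee_fin.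
- by rewrite mule_ge0 ?F0 ?lee_fin.
by rewrite (esumZl A0 S0) (esumZl B0 F0) -/S -/F SE FE -!EFinM -EFinD.
Qed.

Lemma succ_prob_in01 : 0 <= p <= 1.
Proof.
have mix_ge0 (A B : R) : 0 <= A -> 0 <= B -> 0 <= A * p + B * (1 - p).
  move=> A0 B0; rewrite -lee_fin -esum_success_failure //; apply: esum_ge0 => o _.
  by rewrite lee_fin mulr_ge0 ?(ref_dist.1 o) //; case: (r o).
by have := mix_ge0 1 0; have := mix_ge0 0 1; rewrite !ler01 lexx; lra.
Qed.

Definition tilt (a b : R) (o : O) : R := ref o * (if r o then a else b).

Lemma tilt_dist (a b : R) : 0 <= a -> 0 <= b -> a * p + b * (1 - p) = 1 ->
  is_dist (tilt a b).
Proof.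
move=> a0 b0 ab; split=> [x|]; last by rewrite esum_success_failure // ab.
by rewrite mulr_ge0 ?(ref_dist.1 x) //; case: (r x).
Qed.

Lemma succ_prob_tilt (a b : R) : 0 <= a -> succ_prob r (tilt a b) = a * p.
Proof.
move=> a0; rewrite /succ_prob.
have -> : (fun o => (tilt a b o * (r o)%:R)%:E) =
    (fun o => (ref o * (if r o then a else 0))%:E).
  by apply: funext => o; rewrite /tilt; case: (r o); rewrite ?mulr1 ?mulr0.
by rewrite esum_success_failure // mul0r addr0.
Qed.

Lemma KL_tilt (a b : R) : 0 < a -> 0 < b ->
  KL (tilt a b) ref = (a * ln a * p + b * ln b * (1 - p))%:E.
Proof.
move=> a0 b0; case: ref_dist => ref0 _.
have kl o : kl_term (tilt a b) ref o =
    (ref o * (if r o then a * ln a else b * ln b))%:E.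
  rewrite /kl_term /tilt; have [->|refn0] := eqVneq (ref o) 0.
    by rewrite !mul0r eqxx.
  have ab_neq0 : (if r o then a else b) != 0 by case: (r o); rewrite gt_eqF.
  rewrite (negbTE (mulf_neq0 refn0 ab_neq0)) [_ / ref o]mulrAC divff // mul1r.
  by case: (r o); rewrite mulrA.
have max_part (A B : R) o : maxe (ref o * (if r o then A else B))%:E 0 =
    (ref o * (if r o then Num.max A 0 else Num.max B 0))%:E.
  by rewrite -EFin_max; congr EFin; case: (r o); rewrite maxr_pMr ?mulr0.
have maxrBN (x : R) : Num.max x 0 - Num.max (- x) 0 = x.
  by rewrite /Num.max; do 2!case: ifP; lra.
have max0_ge0 (x : R) : 0 <= Num.max x 0 by rewrite le_max lexx orbT.
have posE : (\esum_(o in [set: O]) maxe (kl_term (tilt a b) ref o) 0 =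
    (Num.max (a * ln a) 0 * p + Num.max (b * ln b) 0 * (1 - p))%:E)%E.
  by rewrite -esum_success_failure //; apply: eq_esum => o _; rewrite kl max_part.
have negE : (\esum_(o in [set: O]) maxe (- kl_term (tilt a b) ref o) 0 =
    (Num.max (- (a * ln a)) 0 * p + Num.max (- (b * ln b)) 0 * (1 - p))%:E)%E.
  rewrite -esum_success_failure //; apply: eq_esum => o _.
  by rewrite kl -EFinN -mulrN (fun_if (fun x => - x)) max_part.
rewrite /KL posE negE -EFinB; congr EFin.
by rewrite opprD addrACA -!mulrBl !maxrBN.
Qed.

Lemma exists_dist_succ_prob_gt_KL (lam : R) : 0 < p < 1 -> 0 < lam ->
  exists2 sigma : O -> R, is_dist sigma &
    exists2 kl : R, KL sigma ref = kl%:E & p + lam * kl < succ_prob r sigma.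
Proof.
move=> /andP[p0 p1] lam0.
pose t := p / (p + lam); pose a := 1 + t * (1 - p) / p; pose b := 1 - t.
have plam0 : 0 < p + lam by lra.
have t0 : 0 < t by rewrite divr_gt0.
have t1 : t < 1 by rewrite ltr_pdivrMr //; lra.
have a1 : 1 <= a by rewrite lerDl !(divr_ge0, mulr_ge0, invr_ge0) //; lra.
have b0 : 0 < b by rewrite subr_gt0.
have a0 : 0 < a by lra.
have ab1 : a * p + b * (1 - p) = 1 by rewrite /a /b; field; rewrite gt_eqF.
exists (tilt a b); first by apply: tilt_dist; rewrite ?ltW.
exists (a * ln a * p + b * ln b * (1 - p)); first exact: KL_tilt.
rewrite succ_prob_tilt ?ltW //.
(* [x ln x <= x (x - 1)] bounds the KL divergence by the chi-square divergence *)
have chi2 : a * ln a * p + b * ln b * (1 - p) <= t ^+ 2 * (1 - p) / p.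
  have -> : t ^+ 2 * (1 - p) / p = a * (a - 1) * p + b * (b - 1) * (1 - p).
    by rewrite /a /b; field; rewrite gt_eqF.
  have xlnx x : 0 < x -> x * ln x <= x * (x - 1).
    by move=> x0; apply: ler_wpM2l; [exact: ltW | exact: ln_le_subr1].
  by apply: lerD; apply: ler_wpM2r; [lra | exact: xlnx | lra | exact: xlnx].
have gap : a * p - p - lam * (t ^+ 2 * (1 - p) / p) = (1 - p) * t ^+ 2.
  by rewrite /a /t; field; rewrite !gt_eqF.
have gap0 : 0 < (1 - p) * t ^+ 2 by rewrite mulr_gt0 ?exprn_gt0 ?subr_gt0.
have := ler_wpM2l (ltW lam0) chi2; lra.
Qed.

End success_split.

Lemma noisy_mean_in01 (R : realType) (rp rm p : R) :
  0 <= rp <= 1 -> 0 <= rm <= 1 -> 0 <= p <= 1 -> 0 <= noisy_mean rp rm p <= 1.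
Proof.
(* [noisy_mean rp rm p = (1 - p) rp + p (1 - rm)] is a convex combination *)
rewrite /noisy_mean => /andP[? ?] /andP[? ?] /andP[? ?]; apply/andP; split; nra.
Qed.

Lemma le_penalized_gain (R : realDomainType) (beta u v kl : R) (K : \bar R) :
  0 <= beta -> (0 <= K)%E ->
  (u%:E - beta%:E * kl%:E <= v%:E - beta%:E * K)%E -> u - beta * kl <= v.
Proof.
move=> beta0; case: K => [k | _ | //].
  rewrite lee_fin -EFinM -!EFinB lee_fin => k0 /le_trans; apply.
  by have := mulr_ge0 beta0 k0; lra.
have [->|beta_neq0] := eqVneq beta 0.
  by rewrite !mul0e !sube0 mul0r subr0 lee_fin.
by rewrite mulry gtr0_sg ?lt0r ?beta_neq0 // mul1e -EFinM leeNy_eq.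
Qed.

Theorem proposition2 (R : realType) (Q : Type) (O : countType)
    (rstar : Q -> O -> bool)
    (rho_plus rho_minus : Q -> R)
    (pi_ref : Q -> O -> R) (pi : nat -> Q -> O -> R)
    (q : Q) (beta eps : R) :
  (forall q', 0 <= rho_plus q' <= 1) ->
  (forall q', 0 <= rho_minus q' <= 1) ->
  (forall q', is_dist (pi_ref q')) ->
  (forall k q', is_dist (pi k q')) ->
  0 < beta -> 0 < eps ->
  0 < 1 - rho_plus q - rho_minus q ->
  0 < succ_prob (rstar q) (pi_ref q) < 1 ->
  (forall k, (1 <= k)%N ->
     forall sigma : O -> R, is_dist sigma ->
       (noisy_objective (rho_plus q) (rho_minus q) eps beta (rstar q)
          (pi k.-1 q) sigma (pi_ref q)
        <= noisy_objective (rho_plus q) (rho_minus q) eps beta (rstar q)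
          (pi k.-1 q) (pi k q) (pi_ref q))%E) ->
  forall k, (1 <= k)%N ->
    succ_prob (rstar q) (pi_ref q) < succ_prob (rstar q) (pi k q).
Proof.
move=> rp01 rm01 ref_dist pi_dist beta0 eps0 d0 p01 pi_opt k k1.
set pprev := succ_prob (rstar q) (pi k.-1 q).
set mu := noisy_mean (rho_plus q) (rho_minus q) pprev.
have mu01 : 0 <= mu <= 1.
  by apply: noisy_mean_in01 => //; exact: (succ_prob_in01 _ _ (pi_dist _ _)).
set c := (1 - rho_plus q - rho_minus q) / Num.sqrt (mu * (1 - mu) + eps).
have c0 : 0 < c by rewrite divr_gt0 // sqrtr_gt0; case/andP: mu01 => ? ?; nra.
have [sigma sigma_dist [kl KLE gain]] :=
  exists_dist_succ_prob_gt_KL (rstar q) (pi_ref q) (ref_dist q) _ p01 (divr_gt0 beta0 c0).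
have scaleE x :
    (1 - rho_plus q - rho_minus q) * x / Num.sqrt (mu * (1 - mu) + eps) = c * x.
  by rewrite mulrAC.
have := pi_opt k k1 sigma sigma_dist.
rewrite /noisy_objective -/pprev -/mu KLE !scaleE.
have KL_pik_ge0 := KL_ge0 _ _ (pi_dist k q) (ref_dist q).
move/le_penalized_gain => /(_ (ltW beta0) KL_pik_ge0).
have -> : beta * kl = c * (beta / c * kl) by field; rewrite gt_eqF.
rewrite -(ltr_pM2l c0) mulrDr in gain.
rewrite -(ltr_pM2l c0) !mulrBr; lra.
Qed.
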